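(* Let $(R,+,\cdot)$ be a finite simple additively idempotent semiring with $|R|>2$. Then there exists a finite idempotent irreducible $R$-semimodule.
   Context: A semiring is a nonempty set with a commutative semigroup operation $+$ and a semigroup operation $\cdot$ satisfying both distributive laws; simple if its only congruences are the identity and the full relation; additively idempotent if $r+r=r$ for all $r$. An $R$-semimodule is a commutative semigroup $(M,+)$ with an action $R\times M\to M$ satisfying $r(sx)=(rs)x$, $(r+s)x=rx+sx$, $r(x+y)=rx+ry$; it is idempotent if $x+x=x$. A subsemimodule is a subsemigroup closed under the action; a semimodule congruence is an equivalence compatible with $+$ and the action. $M$ is quasitrivial if $rx=sx$ for all $r,s,x$; id-quasitrivial if $rx=x$ for all $r,x$. $M$ is sub-irreducible if it is not quasitrivial and all proper subsemimodules are id-quasitrivial; quotient-irreducible if not quasitrivial and its only congruences are the identity and $M\times M$; irreducible if both. *)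

From mathcomp Require Import all_boot.
Set Implicit Arguments. Unset Strict Implicit. Unset Printing Implicit Defensive.

Definition is_semiring (R : Type) (add mul : R -> R -> R) : Prop :=
  inhabited R /\
  (forall a b c, add a (add b c) = add (add a b) c) /\
  (forall a b, add a b = add b a) /\
  (forall a b c, mul a (mul b c) = mul (mul a b) c) /\
  (forall a b c, mul a (add b c) = add (mul a b) (mul a c)) /\
  (forall a b c, mul (add a b) c = add (mul a c) (mul b c)).

Definition is_equivalence (T : Type) (E : T -> T -> Prop) : Prop :=
  (forall x, E x x) /\ (forall x y, E x y -> E y x) /\
  (forall x y z, E x y -> E y z -> E x z).

Definition semiring_congruence (R : Type) (add mul : R -> R -> R)
  (E : R -> R -> Prop) : Prop :=
  is_equivalence E /\
  (forall a a' b b', E a a' -> E b b' -> E (add a b) (add a' b')) /\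
  (forall a a' b b', E a a' -> E b b' -> E (mul a b) (mul a' b')).

Definition simple_semiring (R : Type) (add mul : R -> R -> R) : Prop :=
  forall E, semiring_congruence add mul E ->
    (forall x y, E x y <-> x = y) \/ (forall x y, E x y).

Definition add_idempotent (R : Type) (add : R -> R -> R) : Prop :=
  forall r, add r r = r.

Definition is_semimodule (R M : Type) (add mul : R -> R -> R)
  (addM : M -> M -> M) (act : R -> M -> M) : Prop :=
  (forall x y z, addM x (addM y z) = addM (addM x y) z) /\
  (forall x y, addM x y = addM y x) /\
  (forall r s x, act r (act s x) = act (mul r s) x) /\
  (forall r s x, act (add r s) x = addM (act r x) (act s x)) /\
  (forall r x y, act r (addM x y) = addM (act r x) (act r y)).

Definition idempotent_semimodule (M : Type) (addM : M -> M -> M) : Prop :=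
  forall x, addM x x = x.

Definition quasitrivial (R M : Type) (act : R -> M -> M) : Prop :=
  forall r s x, act r x = act s x.

Definition subsemimodule (R M : Type) (addM : M -> M -> M) (act : R -> M -> M)
  (S : M -> Prop) : Prop :=
  (exists x, S x) /\
  (forall x y, S x -> S y -> S (addM x y)) /\
  (forall r x, S x -> S (act r x)).

(* the subsemimodule S (with the induced action) is id-quasitrivial *)
Definition id_quasitrivial_on (R M : Type) (act : R -> M -> M)
  (S : M -> Prop) : Prop :=
  forall r x, S x -> act r x = x.

Definition sub_irreducible (R M : Type) (addM : M -> M -> M)
  (act : R -> M -> M) : Prop :=
  ~ quasitrivial act /\
  forall S, subsemimodule addM act S -> (exists x, ~ S x) ->
    id_quasitrivial_on act S.

Definition semimodule_congruence (R M : Type) (addM : M -> M -> M)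
  (act : R -> M -> M) (E : M -> M -> Prop) : Prop :=
  is_equivalence E /\
  (forall x x' y y', E x x' -> E y y' -> E (addM x y) (addM x' y')) /\
  (forall r x x', E x x' -> E (act r x) (act r x')).

Definition quotient_irreducible (R M : Type) (addM : M -> M -> M)
  (act : R -> M -> M) : Prop :=
  ~ quasitrivial act /\
  forall E, semimodule_congruence addM act E ->
    (forall x y, E x y <-> x = y) \/ (forall x y, E x y).

Definition irreducible_semimodule (R M : Type) (addM : M -> M -> M)
  (act : R -> M -> M) : Prop :=
  sub_irreducible addM act /\ quotient_irreducible addM act.

From mathcomp Require Import all_boot.
From Stdlib Require Import Classical ClassicalEpsilon.
Set Implicit Arguments. Unset Strict Implicit. Unset Printing Implicit Defensive.

(** Take an idempotent non-quasitrivial R-semimodule of minimal size (R acting on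
   itself is one). Every proper subsemimodule and every proper quotient of it is
   smaller, hence quasitrivial. As R is simple, the annihilator congruence makes the
   action faithful; then RM is everything, any congruence other than the identity
   identifies [r x] with [x] and so cannot be proper either, and the kernel congruence
   of [x |-> (r x)_r] is the identity, which makes proper subsemimodules
   id-quasitrivial. The simple semiring enters only through the facts that R is not a
   left-zero semigroup and that its products depend on the left factor; otherwise, by
   idempotency and #|R| > 2, some cut relation [a <= c <-> b <= c] would be a proper
   nontrivial congruence. *)

Definition asbool (P : Prop) : bool :=
  if excluded_middle_informative P then true else false.

Lemma asboolP (P : Prop) : reflect P (asbool P).
Proof. by rewrite /asbool; case: excluded_middle_informative => h; constructor. Qed.

Lemma card_gt2_distinct (T : finType) :
  2 < #|T| -> exists x y z : T, [/\ x <> y, x <> z & y <> z].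
Proof.
rewrite cardE; have := enum_uniq T.
case: (enum T) => [|x [|y [|z t]]] //= /and4P [].
rewrite !inE !negb_or => /and3P [/eqP xy /eqP xz _] /andP [/eqP yz _] _ _ _.
by exists x, y, z.
Qed.

Section SemilatticeOrder.
Variables (T : Type) (add : T -> T -> T).
Hypotheses (addA : forall a b c, add a (add b c) = add (add a b) c)
  (addC : forall a b, add a b = add b a) (addI : add_idempotent add).

Lemma add_leE a b c : add (add a b) c = c <-> add a c = c /\ add b c = c.
Proof.
split=> [abc|[ac bc]]; last by rewrite -addA bc ac.
split; first by rewrite -abc !addA addI.
by rewrite -abc [add a b]addC !addA addI.
Qed.

(* [cut_rel c a b]: [a] and [b] lie on the same side of the principal ideal of [c]. *)
Definition cut_rel (c a b : T) : Prop := add a c = c <-> add b c = c.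

Lemma cut_rel_equiv c : is_equivalence (cut_rel c).
Proof. by rewrite /cut_rel; split; [|split]; intuition. Qed.

Lemma cut_rel_add c a a' b b' :
  cut_rel c a a' -> cut_rel c b b' -> cut_rel c (add a b) (add a' b').
Proof. by rewrite /cut_rel !add_leE; intuition. Qed.

End SemilatticeOrder.

Section SimpleSemiring.
Variables (R : finType) (add mul : R -> R -> R).
Hypotheses (HR : is_semiring add mul) (Hs : simple_semiring add mul)
  (addI : add_idempotent add) (card_gt2 : 2 < #|R|).

Lemma cut_rel_not_mul_compatible :
  ~ (forall c a a' b b', cut_rel add c a a' -> cut_rel add c b b' ->
       cut_rel add c (mul a b) (mul a' b')).
Proof.
move=> cut_mul; have [_ [addA [addC _]]] := HR.
have cut_cong c : semiring_congruence add mul (cut_rel add c).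
  by split; [apply: cut_rel_equiv | split; [apply: cut_rel_add | apply: cut_mul]].
(* Among three distinct elements, the cut at [u] cannot be the identity: it would
   separate [v] and [w] from [u] but then identify them. *)
have cut_full u v w : u <> v -> u <> w -> v <> w -> forall p q, cut_rel add u p q.
  move=> uv uw vw; case: (Hs (cut_cong u)) => [cut_id|//].
  have nvu : add v u <> u.
    by move=> vu; apply: uv; apply/cut_id; rewrite /cut_rel vu addI.
  have nwu : add w u <> u.
    by move=> wu; apply: uw; apply/cut_id; rewrite /cut_rel wu addI.
  by case: vw; apply/cut_id.
have [x [y [z [xy xz yz]]]] := card_gt2_distinct card_gt2.
have yx : add y x = x by apply/(cut_full x y z xy xz yz y x); rewrite addI.
have xy' : add x y = y by apply/(cut_full y x z (nesym xy) yz xz x y); rewrite addI.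
by case: xy; rewrite -yx -[RHS]xy' addC.
Qed.

Lemma mul_not_left_zero : ~ (forall r s, mul r s = r).
Proof. by move=> mulr; apply: cut_rel_not_mul_compatible => c a a' b b'; rewrite !mulr. Qed.

Lemma regular_not_quasitrivial : ~ quasitrivial mul.
Proof.
move=> mul_indep; have [_ [_ [_ [mulA [mulDr _]]]]] := HR.
pose sq a := mul a a.
have mulsq r a : mul r a = sq a by apply: mul_indep.
have sq_cong : semiring_congruence add mul (fun a b => sq a = sq b).
  split; first by split; [|split]; congruence.
  split=> a a' b b' ea eb.
  - by rewrite -!(mulsq a) !mulDr !mulsq ea eb.
  - by rewrite -(mulsq a (mul a b)) -(mulsq a' (mul a' b')) !mulA !mulsq eb.
apply: cut_rel_not_mul_compatible => c a a' b b' _ ebb'.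
case: (Hs sq_cong) => [sq_id|sq_full]; last by rewrite !mulsq (sq_full b b').
have sqK b0 : sq b0 = b0.
  by apply/sq_id; rewrite -{1}(mulsq b0 (sq b0)) /sq mulA mulsq.
by rewrite !mulsq !sqK.
Qed.

End SimpleSemiring.

Definition quasitrivial_below (R : Type) (add mul : R -> R -> R) (n : nat) : Prop :=
  forall (M : finType) (addM : M -> M -> M) (act : R -> M -> M),
    #|M| < n -> is_semimodule add mul addM act -> idempotent_semimodule addM ->
    quasitrivial act.

(* A retraction [f] of a subsemimodule [D] compatible with the operations presents
   the subquotient of [D] by the kernel of [f]; its points are the fixed points of [f]. *)
Section Subquotient.
Variables (R M : finType) (add mul : R -> R -> R).
Variables (addM : M -> M -> M) (act : R -> M -> M).
Hypotheses (HM : is_semimodule add mul addM act) (addMI : idempotent_semimodule addM).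
Variables (D : pred M) (f : M -> M).
Hypotheses (D_add : forall x y, D x -> D y -> D (addM x y))
  (D_act : forall r x, D x -> D (act r x)) (D_f : forall x, D x -> D (f x))
  (fK : forall x, D x -> f (f x) = f x)
  (f_addl : forall a b, D a -> D b -> f (addM (f a) b) = f (addM a b))
  (f_act : forall r a, D a -> f (act r (f a)) = f (act r a)).

Definition fixed_in : pred M := [pred x | D x && (f x == x)].

Notation subquot := {x : M | fixed_in x}.

Definition subquot_add (a b : subquot) : subquot := insubd a (f (addM (val a) (val b))).

Definition subquot_act (r : R) (a : subquot) : subquot := insubd a (f (act r (val a))).

Lemma fixed_in_f x : D x -> fixed_in (f x).
Proof. by move=> Dx; apply/andP; rewrite D_f // fK. Qed.

Lemma subquotP (a : subquot) : D (val a) /\ f (val a) = val a.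
Proof. by case: a => x /= /andP [? /eqP]. Qed.

Lemma val_subquot_add a b : val (subquot_add a b) = f (addM (val a) (val b)).
Proof. by rewrite insubdK //; apply/fixed_in_f/D_add; apply: (subquotP _).1. Qed.

Lemma val_subquot_act r a : val (subquot_act r a) = f (act r (val a)).
Proof. by rewrite insubdK //; apply/fixed_in_f/D_act; apply: (subquotP _).1. Qed.

Lemma f_addr a b : D a -> D b -> f (addM a (f b)) = f (addM a b).
Proof. by have [_ [addMC _]] := HM; move=> Da Db; rewrite addMC f_addl // addMC. Qed.

Lemma subquot_semimodule : is_semimodule add mul subquot_add subquot_act.
Proof.
have [addMA [addMC [actA [actDl actDr]]]] := HM.
split; [|split; [|split; [|split]]] => [a b c|a b|p q a|p q a|p a b]; apply: val_inj;
  rewrite ?val_subquot_add ?val_subquot_act ?val_subquot_add;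
  have [Da _] := subquotP a; try have [Db _] := subquotP b; try have [Dc _] := subquotP c.
- by rewrite f_addr ?D_add // f_addl ?D_add // addMA.
- by rewrite addMC.
- by rewrite f_act ?D_act // actA.
- by rewrite actDl -f_addl ?D_act // -f_addr ?D_f ?D_act.
- by rewrite f_act ?D_add // actDr -f_addl ?D_act // -f_addr ?D_f ?D_act.
Qed.

Lemma subquot_idempotent : idempotent_semimodule subquot_add.
Proof. by move=> a; apply: val_inj; rewrite val_subquot_add addMI (subquotP a).2. Qed.

Lemma card_subquot_lt : (exists x, ~~ fixed_in x) -> #|{: subquot}| < #|M|.
Proof.
move=> [x nfx]; rewrite card_sig -(cardC fixed_in) -[X in X < _]addn0 ltn_add2l.
by apply/card_gt0P; exists x.
Qed.

Lemma subquot_quasitrivial :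
  quasitrivial_below add mul #|M| -> (exists x, ~~ fixed_in x) ->
  forall r s x, fixed_in x -> f (act r x) = f (act s x).
Proof.
move=> Hmin nfixed r s x fx.
have qt := Hmin _ _ _ (card_subquot_lt nfixed) subquot_semimodule subquot_idempotent.
by have := congr1 val (qt r s (exist _ x fx)); rewrite !val_subquot_act.
Qed.

End Subquotient.

Section SmallSubquotients.
Variables (R M : finType) (add mul : R -> R -> R).
Variables (addM : M -> M -> M) (act : R -> M -> M).
Hypotheses (HM : is_semimodule add mul addM act) (addMI : idempotent_semimodule addM)
  (Hmin : quasitrivial_below add mul #|M|).

Lemma proper_subsemimodule_quasitrivial S :
  subsemimodule addM act S -> (exists x, ~ S x) ->
  forall r s x, S x -> act r x = act s x.
Proof.
move=> [_ [S_add S_act]] [x nSx] r s y Sy.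
pose D := [pred z | asbool (S z)].
apply: (@subquot_quasitrivial _ _ add mul addM act HM addMI D id) => //.
- by move=> a b /asboolP Sa /asboolP Sb; apply/asboolP/S_add.
- by move=> q a /asboolP Sa; apply/asboolP/S_act.
- by exists x; apply/negP => /andP [/asboolP].
- by apply/andP; split=> //; apply/asboolP.
Qed.

Lemma congruence_quasitrivial E :
  semimodule_congruence addM act E -> (exists x y, E x y /\ x <> y) ->
  forall r s z, E (act r z) (act s z).
Proof.
move=> [[Erefl [Esym Etrans]] [E_add E_act]] [x [y [Exy nxy]]] r s z.
pose rep z := odflt z [pick w | asbool (E z w)].
have E_rep a : E a (rep a).
  rewrite /rep; case: pickP => [w /asboolP //|none].
  by have /asboolP[] := none a.
have rep_eq a b : E a b -> rep a = rep b.
  move=> Eab; have same_class : (fun w => asbool (E a w)) =1 (fun w => asbool (E b w)).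
    by move=> w; apply/asboolP/asboolP => Ew; [apply: Etrans (Esym _ _ Eab) Ew|apply: Etrans Eab Ew].
  rewrite /rep (eq_pick same_class); case: pickP => [//|none].
  by have /asboolP[] := none b.
have rep_E a b : rep a = rep b -> E a b.
  by move=> eab; apply: Etrans (E_rep a) _; rewrite eab; apply: Esym.
have rep_act q a : E (act q a) (rep (act q (rep a))) by apply: Etrans (E_act _ _ _ (E_rep a)) _.
have rep_qt : rep (act r (rep z)) = rep (act s (rep z)).
  apply: (@subquot_quasitrivial _ _ add mul addM act HM addMI predT rep) => //.
  - by move=> a _; apply/esym/rep_eq.
  - by move=> a b _ _; apply/rep_eq/E_add => //; apply: Esym.
  - by move=> q a _; apply/rep_eq/E_act/Esym.
  - case: (rep x =P x) => [rx|nrx]; last by exists x; apply/andP => -[_ /eqP].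
    case: (rep y =P y) => [ry|nry]; last by exists y; apply/andP => -[_ /eqP].
    by case: nxy; rewrite -rx -ry; apply: rep_eq.
  - by apply/andP; rewrite (rep_eq _ _ (Esym _ _ (E_rep z))).
apply: Etrans (rep_act r z) _; rewrite rep_qt; apply: Esym; exact: rep_act.
Qed.

End SmallSubquotients.

Inductive act_span (R M : Type) (addM : M -> M -> M) (act : R -> M -> M) : M -> Prop :=
| act_span_act r x : act_span addM act (act r x)
| act_span_add a b : act_span addM act a -> act_span addM act b -> act_span addM act (addM a b).

Section MinimalSemimodule.
Variables (R M : finType) (add mul : R -> R -> R).
Variables (addM : M -> M -> M) (act : R -> M -> M).
Hypotheses (HR : is_semiring add mul) (Hs : simple_semiring add mul)
  (addI : add_idempotent add) (card_gt2 : 2 < #|R|).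
Hypotheses (HM : is_semimodule add mul addM act) (addMI : idempotent_semimodule addM)
  (nqt : ~ quasitrivial act) (Hmin : quasitrivial_below add mul #|M|).

Lemma act_faithful r s : (forall x, act r x = act s x) -> r = s.
Proof.
have [_ [_ [actA [actDl _]]]] := HM.
have ann_cong : semiring_congruence add mul (fun r s => forall x, act r x = act s x).
  split; first by split; [|split]; congruence.
  by split=> a a' b b' ea eb x; rewrite ?actDl -?actA ea eb.
case: (Hs ann_cong) => [ann_id|ann_full]; first by move/ann_id.
by case: nqt => p q x; apply: ann_full.
Qed.

Lemma act_span_all x : act_span addM act x.
Proof.
have [_ [_ [actA _]]] := HM.
apply: NNPP => nspan; apply: (regular_not_quasitrivial HR Hs addI card_gt2).
move=> r t s; apply: act_faithful => y; rewrite -!actA.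
apply: (proper_subsemimodule_quasitrivial HM addMI Hmin (S := act_span addM act)).
- by split; [exists (act r y); apply: act_span_act | split; [apply: act_span_add | move=> *; apply: act_span_act]].
- by exists x.
- exact: act_span_act.
Qed.

Lemma congruence_act_absorb E :
  semimodule_congruence addM act E -> (exists x y, E x y /\ x <> y) ->
  forall r z, E (act r z) z.
Proof.
move=> E_cong nid r z; have [_ [_ [actA [_ actDr]]]] := HM.
have [_ [E_add _]] := E_cong.
elim: (act_span_all z) => [t w|a b _ Ea _ Eb]; last by rewrite actDr; apply: E_add.
by rewrite actA; apply: (congruence_quasitrivial HM addMI Hmin E_cong nid).
Qed.

Lemma minimal_quotient_irreducible : quotient_irreducible addM act.
Proof.
split=> // E E_cong; have [[Erefl [Esym Etrans]] [E_add E_act]] := E_cong.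
case: (classic (forall x y, E x y)) => [|nfull]; [by right | left].
move=> x y; split=> [Exy|->]; last exact: Erefl.
apply: NNPP => nxy; have [u [v nEuv]] : exists u v, ~ E u v.
  by apply: NNPP => nex; apply: nfull => u v; apply: NNPP => nEuv; apply: nex; exists u, v.
have absorb := congruence_act_absorb E_cong (ex_intro _ x (ex_intro _ y (conj Exy nxy))).
(* As [act q a] is congruent to [a], each class is a proper subsemimodule. *)
apply: nqt => r s z.
apply: (proper_subsemimodule_quasitrivial HM addMI Hmin (S := fun w => E w z)); last exact: Erefl.
- split; first by exists z; apply: Erefl.
  split=> [a b Ea Eb|q a Ea]; first by rewrite -(addMI z); apply: E_add.
  by apply: Etrans (absorb q a) Ea.
- case: (classic (E u z)) => [Euz|]; last by exists u.
  case: (classic (E v z)) => [Evz|]; last by exists v.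
  by case: nEuv; apply: Etrans Euz (Esym _ _ Evz).
Qed.

Lemma act_separates x y : (forall r, act r x = act r y) -> x = y.
Proof.
have [_ [_ [actA [_ actDr]]]] := HM.
have ann_cong : semimodule_congruence addM act (fun x y => forall r, act r x = act r y).
  split; first by split; [|split]; congruence.
  by split=> [a a' b b' ea eb r|s a a' e r]; rewrite ?actDr ?actA ?ea ?eb ?e.
case: minimal_quotient_irreducible => _ /(_ _ ann_cong) [ann_id|ann_full]; first by move/ann_id.
case: (mul_not_left_zero HR Hs addI card_gt2) => r s; apply: act_faithful => z.
by rewrite -actA; apply: ann_full.
Qed.

Lemma minimal_sub_irreducible : sub_irreducible addM act.
Proof.
split=> // S S_sub nS r y Sy; have [_ [_ [actA _]]] := HM.
apply: act_separates => t; rewrite actA.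
exact: (proper_subsemimodule_quasitrivial HM addMI Hmin S_sub nS).
Qed.

Lemma minimal_irreducible : irreducible_semimodule addM act.
Proof. by split; [apply: minimal_sub_irreducible | apply: minimal_quotient_irreducible]. Qed.

End MinimalSemimodule.

Lemma exists_minimal_nonquasitrivial (R M : finType) (add mul : R -> R -> R)
    (addM : M -> M -> M) (act : R -> M -> M) :
  is_semimodule add mul addM act -> idempotent_semimodule addM -> ~ quasitrivial act ->
  exists (M' : finType) (addM' : M' -> M' -> M') (act' : R -> M' -> M'),
    [/\ is_semimodule add mul addM' act', idempotent_semimodule addM',
        ~ quasitrivial act' & quasitrivial_below add mul #|M'|].
Proof.
have [n] := ubnP #|M|; elim: n => // n IH in M addM act *; rewrite ltnS => le_Mn HM addMI nqt.
case: (classic (quasitrivial_below add mul #|M|)) => [Hmin|nmin]; first by exists M, addM, act.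
apply: NNPP => none; apply: nmin => M' addM' act' lt_M'M HM' addMI'.
apply: NNPP => nqt'; apply: none; apply: (IH M' addM' act') => //.
exact: leq_trans lt_M'M le_Mn.
Qed.

Lemma regular_semimodule (R : Type) (add mul : R -> R -> R) :
  is_semiring add mul -> is_semimodule add mul add mul.
Proof. by move=> [_ [addA [addC [mulA [mulDr mulDl]]]]]. Qed.

Theorem proposition2p17 (R : finType) (add mul : R -> R -> R) :
  is_semiring add mul ->
  simple_semiring add mul ->
  add_idempotent add ->
  2 < #|R| ->
  exists (M : finType) (addM : M -> M -> M) (act : R -> M -> M),
    is_semimodule add mul addM act /\
    idempotent_semimodule addM /\
    irreducible_semimodule addM act.
Proof.
move=> HR Hs addI card_gt2.
have [M [addM [act [HM addMI nqt Hmin]]]] :=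
  exists_minimal_nonquasitrivial (regular_semimodule HR) addI
    (regular_not_quasitrivial HR Hs addI card_gt2).
exists M, addM, act; split=> //; split=> //.
exact: (minimal_irreducible HR Hs addI card_gt2 HM addMI nqt Hmin).
Qed.
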